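(* Let $G$ be a graph with a valid edge partition and let $C$ be a compatible cycle. Let $f$ be the unique edge of $C$ not in the 2-forest. Removing $f$ from the spanning tree splits it into exactly two trees $t_1$ and $t_2$. Then the number of edges of $C$ with one end in $t_1$ and the other in $t_2$ (counting $f$) is non-zero and even. Moreover, if $f'\neq f$ is any such edge of $C$ and we swap $f$ and $f'$ between the two parts of the edge partition, the result is a valid edge partition with the same associated vertex partition.
   Context: A spanning 2-forest is a spanning forest with exactly two trees (a tree may be a single vertex). A valid edge partition of a graph is a bipartition of its edge set such that one part is the edge set of a spanning tree and the other is the edge set of a spanning 2-forest; its associated vertex partition is given by the vertex sets of the two trees of the 2-forest. A cycle $C$ is compatible with the valid edge partition if all vertices of $C$ lie in the same part of the vertex partition and exactly one edge of $C$ lies in the spanning-tree part. *)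

From mathcomp Require Import all_boot.
Set Implicit Arguments. Unset Strict Implicit. Unset Printing Implicit Defensive.

(* A finite simple graph: vertex set = the finType T, edge set E : {set {set T}},
   every edge being a 2-element subset of T. *)
Definition simple_graph (T : finType) (E : {set {set T}}) : Prop :=
  forall e, e \in E -> #|e| = 2.

Definition adjF (T : finType) (F : {set {set T}}) : rel T :=
  fun x y => [set x; y] \in F.

Definition is_cycle (T : finType) (F : {set {set T}}) (c : seq T) : Prop :=
  [/\ uniq c, 3 <= size c & cycle (adjF F) c].

Definition cycle_edges (T : finType) (c : seq T) : {set {set T}} :=
  [set [set x; next c x] | x in c].

Definition acyclic (T : finType) (F : {set {set T}}) : Prop :=
  ~ exists c : seq T, is_cycle F c.

Definition comp (T : finType) (F : {set {set T}}) (x : T) : {set T} :=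
  [set y | connect (adjF F) x y].

Definition components (T : finType) (F : {set {set T}}) : {set {set T}} :=
  [set comp F x | x in T].

Definition spanning_tree (T : finType) (E F : {set {set T}}) : Prop :=
  [/\ F \subset E, acyclic F & #|components F| = 1].

Definition spanning_2forest (T : finType) (E F : {set {set T}}) : Prop :=
  [/\ F \subset E, acyclic F & #|components F| = 2].

Definition valid_edge_partition (T : finType) (E A B : {set {set T}}) : Prop :=
  [/\ A :|: B = E, A :&: B = set0, spanning_tree E A & spanning_2forest E B].

Definition vertex_partition (T : finType) (A B : {set {set T}}) : {set {set T}} :=
  components B.

Definition compatible (T : finType) (A B : {set {set T}}) (c : seq T) : Prop :=
  (exists2 P, P \in vertex_partition A B & {subset c <= P}) /\
  #|cycle_edges c :&: A| = 1.

Definition crosses (T : finType) (t1 t2 : {set T}) (e : {set T}) : bool :=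
  [exists x, exists y, [&& e == [set x; y], x \in t1 & y \in t2]].

From Pilot Require Import Defs.
From mathcomp Require Import all_boot.

(* Let f = {u, v} be the edge of C in the spanning tree A.  Removing f splits A into
   the component t of u and its complement, which contains v.  Going once around C the
   side changes an even number of times, and it changes at f, so the crossing edges are
   nonzero and even in number.  A crossing edge f' other than f is not in A, hence lies
   in the 2-forest B.  Adding f' to A - f joins the two sides without closing a cycle.
   Since C lies in B + f, the ends of f are joined in B and those of f' are joined in
   B - f' + f, both along C; so exchanging f' for f changes neither the connectivity
   nor the acyclicity of the forest. *)

Set Implicit Arguments.
Unset Strict Implicit.
Unset Printing Implicit Defensive.

Section Connectivity.
Variable T : finType.
Implicit Types (F : {set {set T}}) (a b u x y : T).

Lemma set2_eq a b x y :
  [set a; b] = [set x; y] -> (a = x /\ b = y) \/ (a = y /\ b = x).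
Proof.
move=> eq_ab; have := eq_ab.
have [ab_x ab_y] : a \in [set x; y] /\ b \in [set x; y] by rewrite -eq_ab set21 set22.
case/set2P: ab_x => ->; case/set2P: ab_y => ->.
- move=> eq_xy; have : y \in [set x; x] by rewrite eq_xy set22.
  by case/set2P=> ->; left.
- by left.
- by right.
- move=> eq_xy; have : x \in [set y; y] by rewrite eq_xy set21.
  by case/set2P=> ->; right.
Qed.

Lemma adjF_sym F : symmetric (adjF F).
Proof. by move=> x y; rewrite /adjF setUC. Qed.

Lemma connect_adjF_sym F : connect_sym (adjF F).
Proof. exact/sym_connect_sym/adjF_sym. Qed.

Lemma connect_adjF_sub F F' x y :
  F \subset F' -> connect (adjF F) x y -> connect (adjF F') x y.
Proof. by move=> sFF'; apply: connect_sub => {}x {}y xy; apply/connect1/(subsetP sFF'). Qed.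

Lemma connect_setU1_edge F a b :
  connect (adjF F) a b -> connect (adjF ([set a; b] |: F)) =2 connect (adjF F).
Proof.
move=> ab x y; apply/idP/idP; last exact/connect_adjF_sub/subsetUr.
apply: connect_sub x y => x y; rewrite /adjF in_setU1.
case/orP=> [/eqP/set2_eq[[-> ->]|[-> ->]] | xy] //; last exact: connect1.
by rewrite connect_adjF_sym.
Qed.

Lemma connect_setD1_edge F a b x :
  connect (adjF F) a x ->
  connect (adjF (F :\ [set a; b])) a x || connect (adjF (F :\ [set a; b])) b x.
Proof.
set G := F :\ [set a; b]; set reach := [pred y | connect (adjF G) a y || connect (adjF G) b y].
have reach_closed : closed (adjF F) reach.
  apply: intro_closed; first exact: connect_adjF_sym.
  move=> y z yz; rewrite !inE; case: (eqVneq [set y; z] [set a; b]) => [/set2_eq|ne].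
    by case=> -[_ ->]; rewrite connect0 ?orbT.
  have Gyz : connect (adjF G) y z by rewrite connect1 // /adjF in_setD1 ne.
  by case/orP=> reach_y; rewrite (connect_trans reach_y Gyz) ?orbT.
move=> ax; have := closed_connect reach_closed ax.
by rewrite !inE connect0 => <-.
Qed.

Lemma eq_comp F x y : (Defs.comp F x == Defs.comp F y) = connect (adjF F) x y.
Proof.
apply/eqP/idP => [eq_xy | xy].
  have : y \in Defs.comp F y by rewrite inE connect0.
  by rewrite -eq_xy inE.
by apply/setP => z; rewrite !inE (same_connect (connect_adjF_sym F) xy).
Qed.

Lemma mem_comp_connect F x y z :
  connect (adjF F) y z -> (y \in Defs.comp F x) = (z \in Defs.comp F x).
Proof. by move=> yz; rewrite !inE (same_connect_r (connect_adjF_sym F) yz). Qed.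

Lemma card_components1P F u :
  #|components F| = 1 <-> (forall x, connect (adjF F) u x).
Proof.
split=> [/eqP/cards1P[K defK] x | conn_u].
  have: Defs.comp F u \in components F by apply: imset_f.
  have: Defs.comp F x \in components F by apply: imset_f.
  by rewrite defK !in_set1 -eq_comp => /eqP-> /eqP->.
apply/eqP/cards1P; exists (Defs.comp F u); apply/setP => K; rewrite in_set1.
apply/imsetP/eqP => [[x _ ->] | ->]; last by exists u.
by apply/eqP; rewrite eq_comp connect_adjF_sym.
Qed.

Lemma eq_components F F' :
  connect (adjF F) =2 connect (adjF F') -> components F = components F'.
Proof. by move=> eqFF'; apply: eq_imset => x; apply/setP => y; rewrite !inE eqFF'. Qed.

End Connectivity.

Section Crossing.
Variable T : finType.
Implicit Types (t : {set T}) (a b : T).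

Lemma crosses_sym (t1 t2 : {set T}) : crosses t1 t2 =1 crosses t2 t1.
Proof.
suff sub t t' e : crosses t t' e -> crosses t' t e by move=> e; apply/idP/idP; apply: sub.
case/existsP=> x /existsP[y /and3P[/eqP-> xt yt']].
by apply/existsP; exists y; apply/existsP; exists x; rewrite setUC eqxx xt yt'.
Qed.

Lemma crosses_setC t a b : crosses t (~: t) [set a; b] = ((a \in t) != (b \in t)).
Proof.
apply/existsP/idP => [[x /existsP[y /and3P[/eqP def_ab xt]]] | ab_t].
  by rewrite in_setC; case/set2_eq: def_ab => -[-> ->]; rewrite xt => /negbTE->.
case: (boolP (a \in t)) ab_t => at_ bt.
  by exists a; apply/existsP; exists b; rewrite eqxx at_ in_setC; case: (b \in t) bt.
by exists b; apply/existsP; exists a; rewrite setUC eqxx in_setC at_ andbT; case: (b \in t) bt.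
Qed.

Lemma crosses_set2C t (t1 t2 : {set T}) :
  t1 \in [set t; ~: t] -> t2 \in [set t; ~: t] -> t1 != t2 ->
  crosses t1 t2 =1 crosses t (~: t).
Proof.
by case/set2P=> ->; case/set2P=> ->; rewrite ?eqxx // => _ e; apply: crosses_sym.
Qed.

End Crossing.

Lemma odd_count_neq (T : Type) (g : T -> bool) (h : T -> T) (s : seq T) :
  odd (count (fun x => g x != g (h x)) s) = odd (count g s) (+) odd (count g (map h s)).
Proof.
elim: s => //= x s IHs; rewrite !oddD IHs.
by case: (g x); case: (g (h x)); case: (odd (count g s)); case: (odd (count g (map h s))).
Qed.

Section Cycles.
Variables (T : finType) (c : seq T).
Hypotheses (uniq_c : uniq c) (size_c : 3 <= size c).
Implicit Types (F : {set {set T}}) (t : {set T}) (x y : T).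

Lemma next_neq x : x \in c -> next c x != x.
Proof.
case/rot_to => i [|a s] def_c; first by move: size_c; rewrite -(size_rot i) def_c.
have := rot_uniq i c; rewrite uniq_c def_c /= inE negb_or => /andP[/andP[xa _] _].
by rewrite -(next_rot i uniq_c) def_c /= eqxx eq_sym.
Qed.

Lemma next_next_neq x : x \in c -> next c (next c x) != x.
Proof.
case/rot_to => i [|a [|b s]] def_c; try by move: size_c; rewrite -(size_rot i) def_c.
have := rot_uniq i c; rewrite uniq_c def_c /= !inE !negb_or.
case/andP=> /and3P[xa xb _] /andP[/andP[ab _] _].
by rewrite -!(next_rot i uniq_c) def_c /= eqxx (eq_sym a x) (negbTE xa) eqxx eq_sym.
Qed.

Lemma cycle_edge_inj : {in c &, injective (fun x => [set x; next c x])}.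
Proof.
move=> x y xc yc /set2_eq[[] // | [def_x def_y]].
by have := next_next_neq yc; rewrite -def_x def_y eqxx.
Qed.

Lemma cycle_adjF F : cycle (adjF F) c = (cycle_edges c \subset F).
Proof.
apply/idP/subsetP => [cyc _ /imsetP[x xc ->] | sub_cF]; first exact: next_cycle cyc xc.
by apply: cycle_from_next => // x xc; apply/sub_cF/imset_f.
Qed.

Lemma card_cycle_edges_setId (Q : pred {set T}) :
  #|[set e in cycle_edges c | Q e]| = count (fun x => Q [set x; next c x]) c.
Proof.
have -> : [set e in cycle_edges c | Q e] =
    [set [set x; next c x] | x in c & Q [set x; next c x]].
  apply/setP => e; rewrite inE; apply/andP/imsetP => [[/imsetP[x xc ->] Qe] | [x]].
    by exists x; rewrite // inE xc.
  by rewrite inE => /andP[xc Qx] ->; split; first exact: imset_f.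
rewrite card_in_imset => [|x y /[!inE] /andP[xc _] /andP[yc _]]; last exact: cycle_edge_inj.
set P := fun x => Q [set x; next c x].
rewrite -size_filter; have /card_uniqP <- := filter_uniq P uniq_c.
by apply: eq_card => x; rewrite inE mem_filter andbC.
Qed.

Lemma perm_map_next : perm_eq (map (next c) c) c.
Proof.
apply: uniq_perm => //; first by rewrite map_inj_uniq //; apply: can_inj (prev_next uniq_c).
move=> y; apply/mapP/idP => [[x xc ->] | yc]; first by rewrite mem_next.
by exists (prev c y); rewrite ?mem_prev ?next_prev.
Qed.

Lemma count_next_neq_even (g : pred T) : ~~ odd (count (fun x => g x != g (next c x)) c).
Proof. by rewrite odd_count_neq (permP perm_map_next) addbb. Qed.

Lemma card_crossing_cycle_edges t :
  #|[set e in cycle_edges c | crosses t (~: t) e]| =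
  count (fun x => (x \in t) != (next c x \in t)) c.
Proof. by rewrite card_cycle_edges_setId; apply: eq_count => x; rewrite crosses_setC. Qed.

Lemma crossing_cycle_edges_even t : ~~ odd #|[set e in cycle_edges c | crosses t (~: t) e]|.
Proof. by rewrite card_crossing_cycle_edges count_next_neq_even. Qed.

Lemma crossing_cycle_edges_gt0 t x :
  x \in c -> (x \in t) != (next c x \in t) ->
  0 < #|[set e in cycle_edges c | crosses t (~: t) e]|.
Proof. by move=> xc xt; rewrite card_crossing_cycle_edges -has_count; apply/hasP; exists x. Qed.

Lemma cycle_edge_setD1 x z :
  x \in c -> z \in c -> z != x -> adjF (cycle_edges c :\ [set x; next c x]) z (next c z).
Proof.
move=> xc zc zx; have zc_edge : [set z; next c z] \in cycle_edges c by apply: imset_f.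
rewrite /adjF in_setD1 zc_edge andbT; apply: contraNneq zx.
by move/(cycle_edge_inj zc xc)->.
Qed.

Lemma connect_cycle_edges_setD1 x :
  x \in c -> connect (adjF (cycle_edges c :\ [set x; next c x])) x (next c x).
Proof.
(* Rotate c to x :: a :: s; the walk a, s, x uses only the edges at a, s, none at x. *)
move=> xc; set G := cycle_edges c :\ _; have edgeG := cycle_edge_setD1 xc.
case/rot_to: (xc) => i s def_c.
have: fcycle (next c) (x :: s) by rewrite -def_c rot_cycle; apply: cycle_next.
have: all [pred z | (z \in c) && (z != x)] s.
  have: uniq (x :: s) by rewrite -def_c rot_uniq.
  case/andP=> xs _; apply/allP => z zs /=; rewrite -(mem_rot i) def_c inE zs orbT.
  by apply: contraNneq xs => <-.
case: s {def_c} => [|a s] Pas /=; first by rewrite andbT (negbTE (next_neq xc)).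
case/andP=> /eqP-> path_s; rewrite connect_adjF_sym.
apply: (path_connect (p := rcons s x)); last by rewrite inE mem_rcons mem_head orbT.
move: path_s; rewrite !rcons_path => /andP[path_s /eqP last_s]; apply/andP; split.
  apply: (sub_in_path (P := [pred z | (z \in c) && (z != x)])) path_s => //.
  by move=> z w /andP[zc zx] _ /eqP<-; apply: edgeG.
have /andP[lc lx] : (last a s \in c) && (last a s != x) by apply: (allP Pas); apply: mem_last.
by have := edgeG _ lc lx; rewrite last_s.
Qed.

End Cycles.

Section Acyclic.
Variable T : finType.
Implicit Types (F : {set {set T}}) (a b u v : T).

Lemma acyclicS F F' : F \subset F' -> acyclic F' -> acyclic F.
Proof.
move=> sFF' acF' [c [uniq_c size_c cyc]]; apply: acF'; exists c; split=> //.
by apply: sub_cycle cyc => x y; apply: (subsetP sFF').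
Qed.

Lemma acyclic_setD1_edge_disconnect F u v :
  acyclic F -> [set u; v] \in F -> u != v -> ~~ connect (adjF (F :\ [set u; v])) u v.
Proof.
move=> acF uvF uv; apply/negP => /connectP[p0 path_p0 def_v].
case/shortenP: path_p0 def_v => p path_p uniq_p _ def_v; subst v.
case: p path_p uniq_p uv uvF => [|w [|w' p]] path_p uniq_p uv uvF.
- by rewrite eqxx in uv.
- by move: path_p; rewrite /= /adjF in_setD1 eqxx.
apply: acF; exists [:: u, w, w' & p]; split=> //.
rewrite /cycle rcons_path adjF_sym /adjF uvF andbT.
by apply: sub_path path_p => x y; rewrite /adjF in_setD1 => /andP[].
Qed.

Lemma acyclic_setU1_edge F a b :
  acyclic F -> ~~ connect (adjF F) a b -> acyclic ([set a; b] |: F).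
Proof.
move=> acF not_ab [c [uniq_c size_c]]; rewrite cycle_adjF // => sub_c.
have [/imsetP[x xc def_ab] | ab_c] := boolP ([set a; b] \in cycle_edges c).
  have sub_cF : cycle_edges c :\ [set a; b] \subset F by rewrite subDset.
  have := connect_cycle_edges_setD1 uniq_c size_c xc; rewrite -def_ab.
  move/(connect_adjF_sub sub_cF).
  by case/set2_eq: def_ab not_ab => -[-> ->] /negP //; rewrite connect_adjF_sym.
apply: acF; exists c; split; rewrite // cycle_adjF //.
apply/subsetP => e ec; case/setU1P: (subsetP sub_c e ec) => // def_e.
by rewrite -def_e ec in ab_c.
Qed.

End Acyclic.

Section TreeEdgeRemoval.
Variables (T : finType) (F : {set {set T}}) (u v : T).
Hypotheses (acF : acyclic F) (connF : forall x, connect (adjF F) u x).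
Hypotheses (uvF : [set u; v] \in F) (neq_uv : u != v).
Local Notation F0 := (F :\ [set u; v]).
Local Notation Cu := (Defs.comp F0 u).

Lemma comp_setD1_edge : Defs.comp F0 v = ~: Cu.
Proof.
apply/setP => x; rewrite !inE; have := connect_setD1_edge v (connF x).
case: (boolP (connect (adjF F0) u x)) => [ux _ | _ /= -> //]; apply/negP => vx.
have /negP := acyclic_setD1_edge_disconnect acF uvF neq_uv; apply.
by rewrite (connect_trans ux) // connect_adjF_sym.
Qed.

Lemma components_setD1_edge : components F0 = [set Cu; ~: Cu].
Proof.
rewrite -comp_setD1_edge; apply/setP => K; rewrite in_set2.
apply/imsetP/idP => [[x _ ->] | /orP[] /eqP->]; [ | by exists u | by exists v].
by rewrite !eq_comp !(connect_adjF_sym _ x) connect_setD1_edge.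
Qed.

Lemma comp_setD1_edge_sep : (u \in Cu) != (v \in Cu).
Proof.
have : v \in ~: Cu by rewrite -comp_setD1_edge inE connect0.
by rewrite in_setC !inE connect0 => /negbTE->.
Qed.

Lemma comp_setD1_edge_neq : Cu != ~: Cu.
Proof. by apply/negP => /eqP/setP/(_ u); rewrite in_setC inE connect0. Qed.

Lemma tree_exchange y y' : (y \in Cu) != (y' \in Cu) ->
  acyclic ([set y; y'] |: F0) /\ forall x, connect (adjF ([set y; y'] |: F0)) u x.
Proof.
move=> yy'; split.
  apply: acyclic_setU1_edge; first exact: acyclicS (subD1set F _) acF.
  by apply: contra yy' => /(mem_comp_connect u)->.
set G := _ |: F0; have sub0 : F0 \subset G := subsetU1 _ _.
have cross z z' : [set z; z'] \in G -> z \in Cu -> z' \notin Cu -> connect (adjF G) u v.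
  move=> zz'; rewrite -in_setC -comp_setD1_edge !inE => uz vz'.
  apply: connect_trans (connect_adjF_sub sub0 uz) (connect_trans (connect1 zz') _).
  by rewrite connect_adjF_sym (connect_adjF_sub sub0 vz').
have uv_G : connect (adjF G) u v.
  have y'yG : [set y'; y] \in G by rewrite setUC setU11.
  move: (cross y y' (setU11 _ _)) (cross y' y y'yG) yy'.
  by case: (y \in Cu); case: (y' \in Cu) => h1 h2 //= _; [apply: h1 | apply: h2].
move=> x; case/orP: (connect_setD1_edge v (connF x)) => [ux | vx].
  exact: connect_adjF_sub sub0 ux.
exact: connect_trans uv_G (connect_adjF_sub sub0 vx).
Qed.

End TreeEdgeRemoval.


Section CycleExchange.
Variables (T : finType) (F : {set {set T}}) (c : seq T) (x y : T).
Hypotheses (acF : acyclic F) (uniq_c : uniq c) (size_c : 3 <= size c).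
Hypotheses (xc : x \in c) (yc : y \in c).
Hypotheses (sub_c : cycle_edges c \subset [set x; next c x] |: F).
Hypothesis (yF : [set y; next c y] \in F).
Local Notation F' := ([set x; next c x] |: (F :\ [set y; next c y])).

Let connect_x : connect (adjF F) x (next c x).
Proof.
have sub_cF : cycle_edges c :\ [set x; next c x] \subset F by rewrite subDset.
exact: connect_adjF_sub sub_cF (connect_cycle_edges_setD1 uniq_c size_c xc).
Qed.

Let connect_y : connect (adjF F') y (next c y).
Proof.
have sub_cF' : cycle_edges c :\ [set y; next c y] \subset F'.
  apply/subsetP => d /setD1P[dy dc].
  by case/setU1P: (subsetP sub_c d dc) => [-> | dF]; rewrite !inE ?eqxx // dy dF orbT.
exact: connect_adjF_sub sub_cF' (connect_cycle_edges_setD1 uniq_c size_c yc).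
Qed.

Lemma connect_cycle_exchange : connect (adjF F') =2 connect (adjF F).
Proof.
move=> a b; apply/idP/idP => ab.
  by rewrite -(connect_setU1_edge connect_x); apply: connect_adjF_sub ab; apply/setUS/subD1set.
rewrite -(connect_setU1_edge connect_y); apply: connect_adjF_sub ab.
by apply/subsetP => d dF; rewrite !inE dF; case: (d == _); rewrite ?orbT.
Qed.

Lemma acyclic_cycle_exchange : acyclic F'.
Proof.
apply: acyclic_setU1_edge; first exact: acyclicS (subD1set F _) acF.
apply/negP => x_F0; have := connect_y; rewrite connect_setU1_edge //.
by apply/negP/acyclic_setD1_edge_disconnect => //; rewrite eq_sym next_neq.
Qed.

End CycleExchange.

Lemma swap_partition (T : finType) (E A B : {set T}) a b :
  A :|: B = E -> A :&: B = set0 -> a \in A -> b \in B ->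
  (b |: (A :\ a)) :|: (a |: (B :\ b)) = E /\ (b |: (A :\ a)) :&: (a |: (B :\ b)) = set0.
Proof.
move=> <- AB0 aA bB; have notAB e : e \in A -> e \in B = false.
  by move=> eA; apply/negP => eB; have /setP/(_ e) := AB0; rewrite !inE eA eB.
have ab : a != b by apply: contraTneq bB => <-; rewrite notAB.
split; apply/setP => e; rewrite !inE.
  have [-> | ea] := eqVneq e a; first by rewrite aA !orbT.
  by have [-> | eb] := eqVneq e b; first by rewrite bB !orbT.
have [-> | ea] := eqVneq e a; first by rewrite (negbTE ab) andbT.
have [// | eb] := eqVneq e b.
by case eA: (e \in A); rewrite //= notAB.
Qed.

Lemma setI_card1_subsetU1 (T : finType) (S E A B : {set T}) f :
  A :|: B = E -> S \subset E -> #|S :&: A| = 1 -> f \in S -> f \notin B ->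
  f \in A /\ S \subset f |: B.
Proof.
move=> AB SE /eqP/cards1P[g SAg] fS fB.
have fA : f \in A by have := subsetP SE f fS; rewrite -AB inE (negbTE fB) orbF.
split=> //; apply/subsetP => e eS; rewrite in_setU1.
have := subsetP SE e eS; rewrite -AB inE => /orP[eA | ->]; last by rewrite orbT.
have : f \in [set g] by rewrite -SAg inE fS fA.
have : e \in [set g] by rewrite -SAg inE eS eA.
by rewrite !in_set1 => /eqP-> /eqP->; rewrite eqxx.
Qed.

Section SwapEdges.
Variables (T : finType) (E A B : {set {set T}}) (c : seq T) (u y : T).
Hypotheses (vAB : valid_edge_partition E A B) (uniq_c : uniq c) (size_c : 3 <= size c).
Hypotheses (uc : u \in c) (yc : y \in c).
Local Notation f := [set u; next c u].
Local Notation f' := [set y; next c y].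
Local Notation Cu := (Defs.comp (A :\ f) u).
Hypotheses (fA : f \in A) (f'B : f' \in B) (sub_cB : cycle_edges c \subset f |: B).
Hypothesis (cross_f' : (y \in Cu) != (next c y \in Cu)).

Lemma valid_edge_partition_swap :
  valid_edge_partition E (f' |: (A :\ f)) (f |: (B :\ f')) /\
  vertex_partition (f' |: (A :\ f)) (f |: (B :\ f')) = vertex_partition A B.
Proof.
have [AB AB0 [_ acA cardA] [_ acB cardB]] := vAB.
have [AB' AB'0] := swap_partition AB AB0 fA f'B.
have compsB := eq_components (connect_cycle_exchange uniq_c size_c uc yc sub_cB).
have connA := (card_components1P A u).1 cardA.
have uv : u != next c u by rewrite eq_sym next_neq.
have [acA' connA'] := tree_exchange acA connA fA uv cross_f'.
split; last exact: compsB.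
split => //; split; first by rewrite -AB' subsetUl.
- exact: acA'.
- exact/(card_components1P _ u).
- by rewrite -AB' subsetUr.
- exact: acyclic_cycle_exchange acB uniq_c size_c yc sub_cB f'B.
- by rewrite compsB.
Qed.

End SwapEdges.

Unset Implicit Arguments.

Theorem lemma5p5 (T : finType) (E A B : {set {set T}}) (c : seq T) (f : {set T}) :
  simple_graph E ->
  valid_edge_partition E A B ->
  is_cycle E c ->
  compatible A B c ->
  f \in cycle_edges c -> f \notin B ->
  #|components (A :\ f)| = 2 /\
  forall t1 t2, t1 \in components (A :\ f) -> t2 \in components (A :\ f) -> t1 != t2 ->
    (0 < #|[set e in cycle_edges c | crosses t1 t2 e]| /\
     ~~ odd #|[set e in cycle_edges c | crosses t1 t2 e]|) /\
    (forall f', f' \in cycle_edges c -> crosses t1 t2 f' -> f' != f ->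
       valid_edge_partition E (f' |: (A :\ f)) (f |: (B :\ f')) /\
       vertex_partition (f' |: (A :\ f)) (f |: (B :\ f')) = vertex_partition A B).
Proof.
move=> _ vAB [uniq_c size_c]; have [AB _ [_ acA cardA] _] := vAB.
rewrite cycle_adjF // => sub_cE [_ card_cA] fc fB.
have [fA sub_cB] := setI_card1_subsetU1 AB sub_cE card_cA fc fB.
have /imsetP[u uc def_f] := fc; subst f.
have connA := (card_components1P A u).1 cardA.
have uv : u != next c u by rewrite eq_sym next_neq.
rewrite components_setD1_edge //.
split; first by rewrite cards2 comp_setD1_edge_neq.
move=> t1 t2 t1P t2P t12; have crossE := crosses_set2C t1P t2P t12.
under eq_finset => e do rewrite crossE.
split.
  split; last exact: crossing_cycle_edges_even.
  exact: crossing_cycle_edges_gt0 uc (comp_setD1_edge_sep acA connA fA uv).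
move=> f' f'c; rewrite crossE => cross_f' f'f; have /imsetP[y yc def_f'] := f'c; subst f'.
have f'B : [set y; next c y] \in B.
  by move/subsetP/(_ _ f'c): sub_cB; rewrite in_setU1 (negbTE f'f).
by rewrite crosses_setC in cross_f'; apply: valid_edge_partition_swap.
Qed.
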